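(* The outer length billiard map $T$ and its square $T^2$ are positive twist maps of the phase cylinder in the coordinates $(\alpha,R)$. That is, if $(\alpha',R')=T(\alpha,R)$ and $(\alpha'',R'')=T^2(\alpha,R)$, then $\partial\alpha'/\partial R>0$ and $\partial\alpha''/\partial R>0$ everywhere.
   Context: Let $\gamma$ be an oval: a smooth closed curve in $\mathbb R^2$ with everywhere positive curvature, oriented counterclockwise. Its support function is a smooth $2\pi$-periodic $p$ with $p+p''>0$. $L(\alpha)=\{x\cos\alpha+y\sin\alpha=p(\alpha)\}$ is the tangent line with outer normal $(\cos\alpha,\sin\alpha)$, touching $\gamma$ at $\gamma(\alpha)=p(\alpha)(\cos\alpha,\sin\alpha)+p'(\alpha)(-\sin\alpha,\cos\alpha)$. Every exterior point is $M=L(\alpha_1)\cap L(\alpha_2)$ with $\alpha_1<\alpha_2<\alpha_1+\pi$. Set $\omega=\alpha_2-\alpha_1$, $l_j=|M-\gamma(\alpha_j)|$ and $R_j=l_j\tan(\omega/2)$. Here $R_j$ is the radius of the circle tangent to $L(\alpha_j)$ at $\gamma(\alpha_j)$, tangent to the other line, and lying on the side of $L(\alpha_j)$ not containing $\gamma$. The outer length billiard map is $T(M)=L(\alpha_2)\cap L(\alpha_3)$, where $\alpha_3\in(\alpha_2,\alpha_2+\pi)$ is defined as follows. Let $K$ be the circle tangent to $L(\alpha_2)$ at $\gamma(\alpha_2)$, on the side of $L(\alpha_2)$ not containing $\gamma$, and tangent to $L(\alpha_1)$. Then $L(\alpha_3)$ is the common tangent line of $\gamma$ and $K$, other than $L(\alpha_1)$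 and $L(\alpha_2)$, leaving $\gamma$ and $K$ on the same side. Equivalently, the radius $R_1$ of $T(M)$ equals the radius $R_2$ of $M$. Phase coordinates: $M\mapsto(\alpha,R):=(\alpha_1,R_1)$. *)

From Stdlib Require Import Reals.
From Coquelicot Require Import Coquelicot.
Open Scope R_scope.

Definition smooth (f : R -> R) : Prop :=
  forall (n : nat) (x : R), ex_derive (Derive_n f n) x.

Definition oval_support (p : R -> R) : Prop :=
  smooth p /\
  (forall x, p (x + 2 * PI) = p x) /\
  (forall x, p x + Derive_n p 2 x > 0).

(* Tangency point gamma(a) = p(a)(cos a, sin a) + p'(a)(-sin a, cos a). *)
Definition gam (p : R -> R) (a : R) : R * R :=
  (p a * cos a - Derive p a * sin a, p a * sin a + Derive p a * cos a).

(* M = L(a1) ∩ L(a2), where L(a) = {x cos a + y sin a = p(a)} (a1 < a2 < a1+pi). *)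
Definition inter (p : R -> R) (a1 a2 : R) : R * R :=
  ((p a1 * sin a2 - p a2 * sin a1) / sin (a2 - a1),
   (p a2 * cos a1 - p a1 * cos a2) / sin (a2 - a1)).

Definition dist2 (u v : R * R) : R :=
  sqrt ((fst u - fst v) ^ 2 + (snd u - snd v) ^ 2).

Definition Rad1 (p : R -> R) (a1 a2 : R) : R :=
  dist2 (inter p a1 a2) (gam p a1) * tan ((a2 - a1) / 2).
Definition Rad2 (p : R -> R) (a1 a2 : R) : R :=
  dist2 (inter p a1 a2) (gam p a2) * tan ((a2 - a1) / 2).

(* A realizes the inverse of the phase coordinates (a1,a2) |-> (a1, R1):
   for a phase point (a,R), A a R is the second angle a2 of the exterior
   point M with coordinates (a,R). *)
Definition phase_inverse (p : R -> R) (A : R -> R -> R) : Prop :=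
  forall a r, 0 < r -> a < A a r < a + PI /\ Rad1 p a (A a r) = r.

(* In phase coordinates, T(a,R) = (a', R') with a' = a2 and R' = R2(a1,a2)
   (since R1(T M) = R2(M)). *)
Definition T_alpha (p : R -> R) (A : R -> R -> R) (a r : R) : R := A a r.
Definition T_R (p : R -> R) (A : R -> R -> R) (a r : R) : R := Rad2 p a (A a r).
Definition T2_alpha (p : R -> R) (A : R -> R -> R) (a r : R) : R :=
  T_alpha p A (T_alpha p A a r) (T_R p A a r).

From Stdlib Require Import Reals Lra Psatz Nsatz ClassicalEpsilon.
From Coquelicot Require Import Coquelicot.
Open Scope R_scope.

(* With ω = α₂ - α₁, let g₁ = p(α₂) - p(α₁) cos ω - p'(α₁) sin ω be the distance
   from γ(α₁) to L(α₂), and g₂ the distance from γ(α₂) to L(α₁). Then l_j sin ω = g_j,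
   so R_j = g_j / (1 + cos ω). As functions of one angle the g_j solve h'' + h = p + p'' > 0,
   and Sturm comparison with sin and cos gives g_j > 0 and ∂R₁/∂α₂ > 0, while
   ∂R₁/∂α₁ < 0 and ∂R₂/∂α₂ > 0 are immediate. Now α' is the inverse of α₂ ↦ R₁(α, α₂),
   so ∂α'/∂R = 1 / ∂₂R₁ > 0, and α'' is defined implicitly by R₁(α', α'') = R₂(α, α'),
   whence ∂α''/∂R = (∂₂R₂(α, α') - ∂₁R₁(α', α'')) / ∂₂R₁(α', α'') · ∂α'/∂R > 0. *)

Lemma differentiable_pt_lim_eq f x y lx ly lx' ly' :
  differentiable_pt_lim f x y lx ly -> lx = lx' -> ly = ly' -> differentiable_pt_lim f x y lx' ly'.
Proof. intros H <- <-. exact H. Qed.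

Lemma differentiable_pt_lim_swap f x y lx ly :
  differentiable_pt_lim f x y lx ly -> differentiable_pt_lim (fun u v => f v u) y x ly lx.
Proof.
  intros H eps. destruct (H eps) as [d Hd]. exists d. intros u v Hu Hv.
  rewrite Rmax_comm, Rplus_comm. exact (Hd v u Hv Hu).
Qed.

Lemma differentiable_pt_lim_proj2_0 f x y l :
  derivable_pt_lim f y l -> differentiable_pt_lim (fun _ v => f v) x y 0 l.
Proof.
  intro H. apply (differentiable_pt_lim_swap (fun u _ => f u)).
  exact (differentiable_pt_lim_proj1_0 f y x l H).
Qed.

Lemma Rmax_Rabs_ge0 u v : 0 <= Rmax (Rabs u) (Rabs v).
Proof. apply Rle_trans with (Rabs u); [apply Rabs_pos | apply Rmax_l]. Qed.

Lemma differentiable_pt_lim_Rplus x y : differentiable_pt_lim Rplus x y 1 1.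
Proof.
  intros eps. exists eps. intros u v _ _.
  replace (u + v - (x + y) - (1 * (u - x) + 1 * (v - y))) with 0 by ring.
  rewrite Rabs_R0. apply Rmult_le_pos; [apply Rlt_le, cond_pos | apply Rmax_Rabs_ge0].
Qed.

Lemma differentiable_pt_lim_Rminus x y : differentiable_pt_lim Rminus x y 1 (-1).
Proof.
  intros eps. exists eps. intros u v _ _.
  replace (u - v - (x - y) - (1 * (u - x) + -1 * (v - y))) with 0 by ring.
  rewrite Rabs_R0. apply Rmult_le_pos; [apply Rlt_le, cond_pos | apply Rmax_Rabs_ge0].
Qed.

Lemma differentiable_pt_lim_Rmult x y : differentiable_pt_lim Rmult x y y x.
Proof.
  intros eps. exists eps. intros u v Hu Hv.
  replace (u * v - x * y - (y * (u - x) + x * (v - y))) with ((u - x) * (v - y)) by ring.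
  rewrite Rabs_mult, Rmult_comm.
  pose proof (Rmax_l (Rabs (u - x)) (Rabs (v - y))). pose proof (Rmax_r (Rabs (u - x)) (Rabs (v - y))).
  pose proof (Rabs_pos (u - x)). pose proof (Rabs_pos (v - y)). nra.
Qed.

Section Differentiable2d.

Variables (f g : R -> R -> R) (x y a b c d : R).
Hypothesis Hf : differentiable_pt_lim f x y a b.
Hypothesis Hg : differentiable_pt_lim g x y c d.

Lemma differentiable_pt_lim_plus :
  differentiable_pt_lim (fun u v => f u v + g u v) x y (a + c) (b + d).
Proof.
  eapply differentiable_pt_lim_eq;
    [apply (differentiable_pt_lim_comp Rplus f g);
     [apply differentiable_pt_lim_Rplus | exact Hf | exact Hg] | ring..].
Qed.

Lemma differentiable_pt_lim_minus :
  differentiable_pt_lim (fun u v => f u v - g u v) x y (a - c) (b - d).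
Proof.
  eapply differentiable_pt_lim_eq;
    [apply (differentiable_pt_lim_comp Rminus f g);
     [apply differentiable_pt_lim_Rminus | exact Hf | exact Hg] | ring..].
Qed.

Lemma differentiable_pt_lim_mult :
  differentiable_pt_lim (fun u v => f u v * g u v) x y (a * g x y + f x y * c) (b * g x y + f x y * d).
Proof.
  eapply differentiable_pt_lim_eq;
    [apply (differentiable_pt_lim_comp Rmult f g);
     [apply differentiable_pt_lim_Rmult | exact Hf | exact Hg] | ring..].
Qed.

Lemma differentiable_pt_lim_comp1 h l :
  derivable_pt_lim h (f x y) l -> differentiable_pt_lim (fun u v => h (f u v)) x y (l * a) (l * b).
Proof.
  intros Hh. eapply differentiable_pt_lim_eq;
    [apply (differentiable_pt_lim_comp (fun s _ => h s) f f);
     [apply differentiable_pt_lim_proj1_0, Hh | exact Hf | exact Hf] | ring..].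
Qed.

End Differentiable2d.

Lemma differentiable_pt_lim_sub_arg h l x y :
  derivable_pt_lim h (y - x) l -> differentiable_pt_lim (fun u v => h (v - u)) x y (- l) l.
Proof.
  intros Hh. eapply differentiable_pt_lim_eq.
  - apply (differentiable_pt_lim_comp1 (fun u v => v - u)); [|exact Hh].
    apply differentiable_pt_lim_minus;
      [apply differentiable_pt_lim_proj2_0 | apply differentiable_pt_lim_proj1_0]; apply derivable_pt_lim_id.
  - ring.
  - ring.
Qed.

Lemma increasing_lt_inv (f : R -> R) (lo hi y1 y2 : R) :
  (forall u v, lo < u -> u < v -> v < hi -> f u < f v) ->
  lo < y1 < hi -> lo < y2 < hi -> f y1 < f y2 -> y1 < y2.
Proof.
  intros Hf H1 H2 Hlt. destruct (Rlt_le_dec y1 y2) as [|Hle]; auto.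
  destruct (Rle_lt_or_eq_dec _ _ Hle) as [Hlt'|Heq].
  - assert (f y2 < f y1) by (apply Hf; lra). lra.
  - subst. lra.
Qed.

Lemma implicit_continuity (g : R -> R -> R) (w lo : R -> R) (L r : R) :
  locally r (fun s => g s (w s) = 0 /\ lo s < w s < lo s + L /\
    forall u v, lo s < u -> u < v -> v < lo s + L -> g s u < g s v) ->
  continuity_pt lo r ->
  (forall y, lo r < y < lo r + L -> continuity_pt (fun s => g s y) r) ->
  continuity_pt w r.
Proof.
  intros Hloc Hlo Hg. apply continuity_pt_locally. intros eps.
  destruct (locally_singleton _ _ Hloc) as [G0 [Hw0 M0]].
  set (e := Rmin eps (Rmin ((w r - lo r) / 2) ((lo r + L - w r) / 2))).
  assert (He : 0 < e) by (unfold e; repeat apply Rmin_pos; try apply cond_pos; lra).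
  assert (He1 : e <= eps) by apply Rmin_l.
  assert (He2 : e <= (w r - lo r) / 2) by (eapply Rle_trans; [apply Rmin_r | apply Rmin_l]).
  assert (He3 : e <= (lo r + L - w r) / 2) by (eapply Rle_trans; [apply Rmin_r | apply Rmin_r]).
  assert (Hneg : locally r (fun s => g s (w r - e) < 0)).
  { apply (locally_pt_comp (fun z => z < 0) (fun s => g s (w r - e))); [|apply Hg; lra].
    apply open_lt. rewrite <- G0. apply M0; lra. }
  assert (Hpos : locally r (fun s => 0 < g s (w r + e))).
  { apply (locally_pt_comp (fun z => 0 < z) (fun s => g s (w r + e))); [|apply Hg; lra].
    apply open_gt. rewrite <- G0. apply M0; lra. }
  assert (Hnear : locally r (fun s => Rabs (lo s - lo r) < e))
    by exact (proj1 (continuity_pt_locally _ _) Hlo (mkposreal e He)).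
  generalize (filter_and _ _ Hloc (filter_and _ _ Hnear (filter_and _ _ Hneg Hpos))).
  apply filter_imp. intros s [[Gs [Hws Ms]] [Hls [Gm Gp]]].
  apply Rabs_def2 in Hls. rewrite <- Gs in Gm, Gp.
  assert (w r - e < w s) by (apply (increasing_lt_inv (g s) (lo s) (lo s + L)); auto; lra).
  assert (w s < w r + e) by (apply (increasing_lt_inv (g s) (lo s) (lo s + L)); auto; lra).
  apply Rabs_def1; lra.
Qed.

Lemma locally_Rabs (P : R -> Prop) r :
  locally r P -> exists d : posreal, forall s, Rabs (s - r) < d -> P s.
Proof. intros [d Hd]. exists d. intros s Hs. apply Hd. exact Hs. Qed.

Lemma increment_lipschitz lx ly h e d :
  ly <> 0 -> d <= Rabs ly / 2 ->
  Rabs (lx * h + ly * e) <= d * Rmax (Rabs h) (Rabs e) ->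
  Rabs e <= (2 * Rabs lx / Rabs ly + 1) * Rabs h.
Proof.
  intros Hly Hd H. assert (Ha := Rabs_pos_lt _ Hly).
  assert (Hk : 0 <= 2 * Rabs lx / Rabs ly) by (apply Rdiv_le_0_compat; [pose proof (Rabs_pos lx) |]; lra).
  pose proof (Rabs_pos h).
  destruct (Rle_dec (Rabs e) (Rabs h)) as [Hle|Hgt]; [nra|].
  rewrite Rmax_right in H by lra.
  assert (T : Rabs (ly * e) <= Rabs (lx * h + ly * e) + Rabs (lx * h)).
  { replace (ly * e) with ((lx * h + ly * e) + - (lx * h)) at 1 by ring.
    rewrite <- (Rabs_Ropp (lx * h)). apply Rabs_triang. }
  rewrite !Rabs_mult in T.
  assert (Rabs ly * Rabs e <= 2 * Rabs lx * Rabs h) by (pose proof (Rabs_pos e); nra).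
  apply (Rmult_le_reg_l (Rabs ly)); [lra|].
  replace (Rabs ly * ((2 * Rabs lx / Rabs ly + 1) * Rabs h)) with
    (2 * Rabs lx * Rabs h + Rabs ly * Rabs h) by (field; lra).
  nra.
Qed.

Lemma increment_quotient lx ly h e c :
  ly <> 0 -> h <> 0 -> Rabs (lx * h + ly * e) <= c * Rabs h ->
  Rabs (e / h - - lx / ly) <= c / Rabs ly.
Proof.
  intros Hly Hh H.
  replace (e / h - - lx / ly) with ((lx * h + ly * e) / (ly * h)) by (field; auto).
  rewrite Rabs_div, Rabs_mult by (apply Rmult_integral_contrapositive; auto).
  assert (Ha := Rabs_pos_lt _ Hly). assert (Hb := Rabs_pos_lt _ Hh).
  apply (Rmult_le_reg_r (Rabs ly * Rabs h)); [nra|].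
  replace (Rabs (lx * h + ly * e) / (Rabs ly * Rabs h) * (Rabs ly * Rabs h))
    with (Rabs (lx * h + ly * e)) by (field; lra).
  replace (c / Rabs ly * (Rabs ly * Rabs h)) with (c * Rabs h) by (field; lra). exact H.
Qed.

Lemma implicit_derive (g : R -> R -> R) (w : R -> R) r lx ly :
  differentiable_pt_lim g r (w r) lx ly -> ly <> 0 -> continuity_pt w r ->
  locally r (fun s => g s (w s) = g r (w r)) ->
  derivable_pt_lim w r (- lx / ly).
Proof.
  intros Hd Hly Hw Hg eps Heps.
  assert (Ha := Rabs_pos_lt _ Hly). set (K := 2 * Rabs lx / Rabs ly + 1).
  assert (HK : 1 <= K) by (unfold K; assert (0 <= 2 * Rabs lx / Rabs ly)
    by (apply Rdiv_le_0_compat; [pose proof (Rabs_pos lx) |]; lra); lra).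
  set (d := Rmin (Rabs ly / 2) (eps * Rabs ly / (2 * K))).
  assert (Hd0 : 0 < d) by (apply Rmin_pos; [lra | apply Rdiv_lt_0_compat; nra]).
  destruct (Hd (mkposreal d Hd0)) as [d1 Hd1]; simpl in Hd1.
  destruct (locally_Rabs _ r (filter_and _ _ Hg (proj1 (continuity_pt_locally _ _) Hw d1)))
    as [d2 Hd2].
  exists (mkposreal _ (Rmin_pos _ _ (cond_pos d1) (cond_pos d2))). simpl.
  intros h Hh0 Hh. assert (Hh1 := Rmin_l d1 d2). assert (Hh2 := Rmin_r d1 d2).
  destruct (Hd2 (r + h) ltac:(replace (r + h - r) with h by ring; lra)) as [Hc He].
  assert (Hb := Hd1 (r + h) (w (r + h)) ltac:(replace (r + h - r) with h by ring; lra) He).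
  rewrite Hc in Hb. replace (r + h - r) with h in Hb by ring.
  replace (g r (w r) - g r (w r) - (lx * h + ly * (w (r + h) - w r)))
    with (- (lx * h + ly * (w (r + h) - w r))) in Hb by ring.
  rewrite Rabs_Ropp in Hb.
  assert (HL := increment_lipschitz lx ly h _ d Hly (Rmin_l _ _) Hb). fold K in HL.
  assert (Hq : Rabs (lx * h + ly * (w (r + h) - w r)) <= d * K * Rabs h).
  { eapply Rle_trans; [exact Hb|]. rewrite Rmult_assoc. apply Rmult_le_compat_l; [lra|].
    pose proof (Rabs_pos h). apply Rmax_lub; [nra | exact HL]. }
  eapply Rle_lt_trans; [exact (increment_quotient _ _ _ _ _ Hly Hh0 Hq)|].
  assert (d * K <= eps * Rabs ly / 2).
  { apply Rle_trans with (eps * Rabs ly / (2 * K) * K); [apply Rmult_le_compat_r; [lra | apply Rmin_r]|].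
    right. field. lra. }
  apply Rle_lt_trans with (eps / 2); [|lra]. unfold Rdiv. apply (Rmult_le_reg_r (Rabs ly)); [lra|].
  rewrite Rmult_assoc, Rinv_l by lra. lra.
Qed.

Lemma wronskian_lt (f f' f'' w w' : R -> R) a b : a < b ->
  (forall t, is_derive f t (f' t)) -> (forall t, is_derive f' t (f'' t)) ->
  (forall t, is_derive w t (w' t)) -> (forall t, is_derive w' t (- w t)) ->
  (forall t, a < t < b -> 0 < (f'' t + f t) * w t) ->
  f' a * w a - f a * w' a < f' b * w b - f b * w' b.
Proof.
  intros Hab Hf Hf' Hw Hw' Hpos.
  destruct (MVT_cor2 (fun t => f' t * w t - f t * w' t)
     (fun t => (f'' t + f t) * w t) a b Hab) as [c [Hc Hcab]].
  - intros c _.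
    replace ((f'' c + f c) * w c) with
      ((f'' c * w c + f' c * w' c) - (f' c * w' c + f c * - w c)) by ring.
    apply (derivable_pt_lim_minus (fun t => f' t * w t) (fun t => f t * w' t));
      apply derivable_pt_lim_mult; apply is_derive_Reals; auto.
  - specialize (Hpos c Hcab). nra.
Qed.

Definition gap1 (p : R -> R) (x y : R) : R :=
  p y - p x * cos (y - x) - Derive p x * sin (y - x).
Definition gap2 (p : R -> R) (x y : R) : R :=
  p x - p y * cos (y - x) + Derive p y * sin (y - x).

Lemma half_angle_facts x y : x < y < x + PI ->
  let h := (y - x) / 2 in
  0 < sin h /\ 0 < cos h /\ sin (y - x) = 2 * sin h * cos h /\
  1 + cos (y - x) = 2 * cos h * cos h /\ 0 < sin (y - x) /\ 0 < 1 + cos (y - x).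
Proof.
  intros Hxy h.
  assert (E : y - x = 2 * h) by (unfold h; field).
  assert (0 < sin h) by (apply sin_gt_0; unfold h; lra).
  assert (0 < cos h) by (apply cos_gt_0; unfold h; lra).
  rewrite E, sin_2a, cos_2a_cos. repeat split; try nra; ring.
Qed.

Lemma one_plus_cos_neq0 x y : x < y < x + PI -> 1 + cos (y - x) <> 0.
Proof. intros Hxy. destruct (half_angle_facts x y Hxy) as [_ [_ [_ [_ [_ HC]]]]]. lra. Qed.

Lemma dist2_along_unit (u v : R * R) k t :
  fst u - fst v = - k * sin t -> snd u - snd v = k * cos t -> dist2 u v = Rabs k.
Proof.
  intros E1 E2. unfold dist2. rewrite E1, E2, <- sqrt_Rsqr_abs. f_equal.
  assert (Ht := sin2_cos2 t). rewrite !Rsqr_pow2 in *.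
  transitivity (k ^ 2 * (sin t ^ 2 + cos t ^ 2)); [ring | rewrite Ht; ring].
Qed.

Lemma inter_sub_gam1 p x y : sin (y - x) <> 0 ->
  fst (inter p x y) - fst (gam p x) = - (gap1 p x y / sin (y - x)) * sin x /\
  snd (inter p x y) - snd (gam p x) = gap1 p x y / sin (y - x) * cos x.
Proof.
  intros Hs. assert (Hx := sin2_cos2 x). unfold Rsqr in Hx.
  unfold inter, gam, gap1; simpl; split; field_simplify_eq; auto;
    rewrite sin_minus, cos_minus; nsatz.
Qed.

Lemma inter_sub_gam2 p x y : sin (y - x) <> 0 ->
  fst (inter p x y) - fst (gam p y) = gap2 p x y / sin (y - x) * sin y /\
  snd (inter p x y) - snd (gam p y) = - (gap2 p x y / sin (y - x)) * cos y.
Proof.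
  intros Hs. assert (Hy := sin2_cos2 y). unfold Rsqr in Hy.
  unfold inter, gam, gap2; simpl; split; field_simplify_eq; auto;
    rewrite sin_minus, cos_minus; nsatz.
Qed.

Definition rad1 (p : R -> R) (x y : R) : R := gap1 p x y / (1 + cos (y - x)).
Definition rad2 (p : R -> R) (x y : R) : R := gap2 p x y / (1 + cos (y - x)).

Lemma tan_half_angle x y : x < y < x + PI ->
  tan ((y - x) / 2) = sin (y - x) / (1 + cos (y - x)).
Proof.
  intros Hxy. destruct (half_angle_facts x y Hxy) as [_ [Hc [ES [EC _]]]].
  unfold tan. rewrite ES, EC. field. lra.
Qed.

Lemma Rad1_eq_gap1 p x y : x < y < x + PI -> Rad1 p x y = Rabs (gap1 p x y) / (1 + cos (y - x)).
Proof.
  intros Hxy. destruct (half_angle_facts x y Hxy) as [_ [_ [_ [_ [HS HC]]]]].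
  destruct (inter_sub_gam1 p x y ltac:(lra)) as [E1 E2].
  unfold Rad1. rewrite (dist2_along_unit _ _ _ _ E1 E2), Rabs_div, (Rabs_pos_eq (sin _)) by lra.
  rewrite tan_half_angle by exact Hxy. field. lra.
Qed.

Lemma Rad2_eq_gap2 p x y : x < y < x + PI -> Rad2 p x y = Rabs (gap2 p x y) / (1 + cos (y - x)).
Proof.
  intros Hxy. destruct (half_angle_facts x y Hxy) as [_ [_ [_ [_ [HS HC]]]]].
  destruct (inter_sub_gam2 p x y ltac:(lra)) as [E1 E2].
  rewrite <- (Ropp_involutive (gap2 p x y / sin (y - x))) in E1.
  unfold Rad2. rewrite (dist2_along_unit _ _ _ _ E1 E2), Rabs_Ropp, Rabs_div, (Rabs_pos_eq (sin _)) by lra.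
  rewrite tan_half_angle by exact Hxy. field. lra.
Qed.

Ltac solve_derive :=
  auto_derive;
  [ repeat split; auto
  | repeat match goal with |- context [Derive (fun u => ?g u)] =>
      change (Derive (fun u => g u)) with (Derive g) end;
    unfold Rminus; ring ].

Section Oval.

Variable p : R -> R.
Hypothesis p_derive : forall x, ex_derive p x.
Hypothesis Dp_derive : forall x, ex_derive (Derive p) x.
Hypothesis curvature_pos : forall x, 0 < p x + Derive (Derive p) x.

Definition gap1_dy (x y : R) : R := Derive p y + p x * sin (y - x) - Derive p x * cos (y - x).

Lemma is_derive_gap1 x y : is_derive (gap1 p x) y (gap1_dy x y).
Proof. unfold gap1, gap1_dy. solve_derive. Qed.

Lemma is_derive_gap1_dy x y :
  is_derive (gap1_dy x) y (Derive (Derive p) y + p x * cos (y - x) + Derive p x * sin (y - x)).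
Proof. unfold gap1_dy. solve_derive. Qed.

Lemma gap1_pos x y : x < y <= x + PI -> 0 < gap1 p x y.
Proof.
  intros Hxy.
  assert (W := wronskian_lt (gap1 p x) (gap1_dy x) _ (fun t => sin (y - t)) (fun t => - cos (y - t)) x y
    ltac:(lra) (is_derive_gap1 x) (is_derive_gap1_dy x)
    ltac:(intro t; solve_derive) ltac:(intro t; solve_derive)).
  assert (P : forall t, x < t < y -> 0 < (Derive (Derive p) t + p x * cos (t - x) + Derive p x * sin (t - x)
     + gap1 p x t) * sin (y - t)).
  { intros t Ht. apply Rmult_lt_0_compat; [|apply sin_gt_0; lra].
    specialize (curvature_pos t). unfold gap1. lra. }
  specialize (W P). unfold gap1_dy in W. unfold gap1 in W |- *.
  rewrite !Rminus_diag, cos_0, sin_0 in W. ring_simplify in W. lra.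
Qed.

Lemma gap1_half_angle_pos x y : x < y < x + PI ->
  0 < gap1_dy x y * cos ((y - x) / 2) + gap1 p x y * sin ((y - x) / 2).
Proof.
  intros Hxy. set (m := (x + y) / 2).
  assert (W := wronskian_lt (gap1 p x) (gap1_dy x) _ (fun t => cos (m - t)) (fun t => sin (m - t)) x y
    ltac:(lra) (is_derive_gap1 x) (is_derive_gap1_dy x)
    ltac:(intro t; solve_derive) ltac:(intro t; solve_derive)).
  assert (P : forall t, x < t < y -> 0 < (Derive (Derive p) t + p x * cos (t - x) + Derive p x * sin (t - x)
     + gap1 p x t) * cos (m - t)).
  { intros t Ht. apply Rmult_lt_0_compat; [|apply cos_gt_0; unfold m; lra].
    specialize (curvature_pos t). unfold gap1. lra. }
  assert (Em : m - y = - ((y - x) / 2)) by (unfold m; field).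
  specialize (W P). unfold gap1_dy in W |- *. unfold gap1 in W |- *. rewrite Em in W.
  rewrite !Rminus_diag, cos_0, sin_0, cos_neg, sin_neg in W. ring_simplify in W. lra.
Qed.

Definition gap2_dx (x y : R) : R := Derive p x - p y * sin (y - x) - Derive p y * cos (y - x).

Lemma gap2_pos x y : x < y < x + PI -> 0 < gap2 p x y.
Proof.
  intros Hxy.
  assert (W := wronskian_lt (fun t => gap2 p t y) (fun t => gap2_dx t y)
    (fun t => Derive (Derive p) t + p y * cos (y - t) - Derive p y * sin (y - t))
    (fun t => sin (t - x)) (fun t => cos (t - x)) x y ltac:(lra)
    ltac:(intro t; unfold gap2, gap2_dx; solve_derive) ltac:(intro t; unfold gap2_dx; solve_derive)
    ltac:(intro t; solve_derive) ltac:(intro t; solve_derive)).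
  assert (P : forall t, x < t < y -> 0 < (Derive (Derive p) t + p y * cos (y - t) - Derive p y * sin (y - t)
     + gap2 p t y) * sin (t - x)).
  { intros t Ht. apply Rmult_lt_0_compat; [|apply sin_gt_0; lra].
    specialize (curvature_pos t). unfold gap2. lra. }
  specialize (W P). unfold gap2_dx in W. unfold gap2 in W |- *.
  rewrite !Rminus_diag, cos_0, sin_0 in W. ring_simplify in W. lra.
Qed.

Definition rad1_dx (x y : R) : R :=
  - (sin (y - x) * ((p x + Derive (Derive p) x) * (1 + cos (y - x)) + gap1 p x y) /
     (1 + cos (y - x)) ^ 2).
Definition rad1_dy (x y : R) : R :=
  (gap1_dy x y * (1 + cos (y - x)) + gap1 p x y * sin (y - x)) / (1 + cos (y - x)) ^ 2.
Definition rad2_dy (x y : R) : R :=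
  sin (y - x) * ((p y + Derive (Derive p) y) * (1 + cos (y - x)) + gap2 p x y) /
  (1 + cos (y - x)) ^ 2.

Lemma derivable_pt_lim_p x : derivable_pt_lim p x (Derive p x).
Proof. apply is_derive_Reals, Derive_correct, p_derive. Qed.

Lemma derivable_pt_lim_Dp x : derivable_pt_lim (Derive p) x (Derive (Derive p) x).
Proof. apply is_derive_Reals, Derive_correct, Dp_derive. Qed.

Lemma differentiable_pt_lim_rad1 x y : 1 + cos (y - x) <> 0 ->
  differentiable_pt_lim (rad1 p) x y (rad1_dx x y) (rad1_dy x y).
Proof.
  intros Hc. unfold rad1, Rdiv.
  eapply differentiable_pt_lim_eq.
  - apply (differentiable_pt_lim_mult (gap1 p) (fun u v => / (1 + cos (v - u)))).
    + unfold gap1. repeat apply differentiable_pt_lim_minus.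
      * apply differentiable_pt_lim_proj2_0, derivable_pt_lim_p.
      * apply (differentiable_pt_lim_mult (fun u _ => p u));
          [apply differentiable_pt_lim_proj1_0, derivable_pt_lim_p | apply differentiable_pt_lim_sub_arg, derivable_pt_lim_cos].
      * apply (differentiable_pt_lim_mult (fun u _ => Derive p u));
          [apply differentiable_pt_lim_proj1_0, derivable_pt_lim_Dp | apply differentiable_pt_lim_sub_arg, derivable_pt_lim_sin].
    + apply (differentiable_pt_lim_comp1 (fun u v => 1 + cos (v - u))).
      * apply (differentiable_pt_lim_plus (fun _ _ => 1)); [|apply differentiable_pt_lim_sub_arg, derivable_pt_lim_cos].
        apply differentiable_pt_lim_proj1_0, derivable_pt_lim_const.
      * apply is_derive_Reals, (is_derive_inv (fun t => t)); [apply is_derive_id | exact Hc].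
  - unfold rad1_dx, gap1. cbv beta. change one with 1. field. exact Hc.
  - unfold rad1_dy, gap1, gap1_dy. cbv beta. change one with 1. field. exact Hc.
Qed.


Lemma derivable_pt_lim_rad1_y x y : x < y < x + PI ->
  derivable_pt_lim (rad1 p x) y (rad1_dy x y).
Proof.
  intros Hxy. replace (rad1_dy x y) with (rad1_dx x y * 0 + rad1_dy x y * 1) by ring.
  apply (derivable_pt_lim_comp_2d (rad1 p) (fun _ => x) (fun t => t)).
  - apply differentiable_pt_lim_rad1, one_plus_cos_neq0, Hxy.
  - apply derivable_pt_lim_const.
  - apply derivable_pt_lim_id.
Qed.

Lemma derivable_pt_lim_rad2_y x y : x < y < x + PI ->
  derivable_pt_lim (rad2 p x) y (rad2_dy x y).
Proof.
  intros Hxy. assert (Hc := one_plus_cos_neq0 x y Hxy).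
  apply is_derive_Reals. unfold rad2, rad2_dy, gap2. auto_derive.
  - repeat split; auto.
  - change (fun u : R => Derive p u) with (Derive p). change (fun u : R => p u) with p.
    unfold Rminus. field. exact Hc.
Qed.

Lemma rad1_dx_neg x y : x < y < x + PI -> rad1_dx x y < 0.
Proof.
  intros Hxy. destruct (half_angle_facts x y Hxy) as [_ [_ [_ [_ [HS HC]]]]].
  assert (Hg := gap1_pos x y ltac:(lra)). assert (Hk := curvature_pos x).
  unfold rad1_dx. apply Ropp_lt_gt_0_contravar, Rdiv_lt_0_compat; [|apply pow_lt; lra].
  apply Rmult_lt_0_compat; [lra | nra].
Qed.

Lemma rad1_dy_pos x y : x < y < x + PI -> 0 < rad1_dy x y.
Proof.
  intros Hxy. destruct (half_angle_facts x y Hxy) as [_ [Hc [ES [EC [_ HC]]]]].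
  assert (Q := gap1_half_angle_pos x y Hxy).
  unfold rad1_dy. apply Rdiv_lt_0_compat; [|apply pow_lt; lra].
  rewrite ES, EC.
  replace (gap1_dy x y * (2 * cos ((y - x) / 2) * cos ((y - x) / 2)) +
    gap1 p x y * (2 * sin ((y - x) / 2) * cos ((y - x) / 2))) with
    (2 * cos ((y - x) / 2) * (gap1_dy x y * cos ((y - x) / 2) + gap1 p x y * sin ((y - x) / 2))) by ring.
  nra.
Qed.

Lemma rad2_dy_pos x y : x < y < x + PI -> 0 < rad2_dy x y.
Proof.
  intros Hxy. destruct (half_angle_facts x y Hxy) as [_ [_ [_ [_ [HS HC]]]]].
  assert (Hg := gap2_pos x y Hxy). assert (Hk := curvature_pos y).
  unfold rad2_dy. apply Rdiv_lt_0_compat; [|apply pow_lt; lra].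
  apply Rmult_lt_0_compat; [lra | nra].
Qed.

Lemma Rad1_eq_rad1 x y : x < y < x + PI -> Rad1 p x y = rad1 p x y.
Proof.
  intros Hxy. rewrite Rad1_eq_gap1 by exact Hxy.
  rewrite Rabs_pos_eq; [reflexivity | apply Rlt_le, gap1_pos; lra].
Qed.

Lemma Rad2_eq_rad2 x y : x < y < x + PI -> Rad2 p x y = rad2 p x y.
Proof.
  intros Hxy. rewrite Rad2_eq_gap2 by exact Hxy.
  rewrite Rabs_pos_eq; [reflexivity | apply Rlt_le, gap2_pos, Hxy].
Qed.

Lemma rad1_increasing x y1 y2 : x < y1 -> y1 < y2 -> y2 < x + PI -> rad1 p x y1 < rad1 p x y2.
Proof.
  intros H1 H12 H2.
  destruct (MVT_cor2 (rad1 p x) (rad1_dy x) y1 y2 H12) as [c [Ec Hc]].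
  - intros c Hc. apply derivable_pt_lim_rad1_y. lra.
  - assert (0 < rad1_dy x c) by (apply rad1_dy_pos; lra). nra.
Qed.

Lemma rad1_surjective a r : 0 < r -> exists y, a < y < a + PI /\ rad1 p a y = r.
Proof.
  intros Hr. assert (Hpi := PI_RGT_0).
  (* IVT on the numerator: [rad1 p a] has a pole at [a + PI]. *)
  set (G := fun y => gap1 p a y - r * (1 + cos (y - a))).
  assert (HG : continuity G).
  { intro y. apply continuity_pt_filterlim, (@ex_derive_continuous R_AbsRing R_NormedModule).
    unfold G, gap1. auto_derive. repeat split; auto. }
  assert (Ga : G a < 0) by (unfold G, gap1; rewrite Rminus_diag, cos_0, sin_0; lra).
  assert (Gb : 0 < G (a + PI)).
  { unfold G. replace (a + PI - a) with PI by ring. rewrite cos_PI.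
    assert (0 < gap1 p a (a + PI)) by (apply gap1_pos; lra). lra. }
  destruct (IVT G a (a + PI) HG ltac:(lra) Ga Gb) as [y [Hy Gy]].
  assert (Hya : y <> a) by (intros ->; lra).
  assert (Hyb : y <> a + PI) by (intros E; rewrite E in Gy; lra).
  exists y. split; [lra|].
  unfold rad1. unfold G in Gy. rewrite (Rminus_diag_uniq _ _ Gy). field. apply one_plus_cos_neq0. lra.
Qed.

Section PhaseMap.

Variable A : R -> R -> R.
Hypothesis A_inverse : phase_inverse p A.

Lemma A_spec a s : 0 < s -> a < A a s < a + PI /\ rad1 p a (A a s) = s.
Proof.
  intros Hs. destruct (A_inverse a s Hs) as [HA HR]. split; [exact HA|].
  rewrite <- Rad1_eq_rad1 by exact HA. exact HR.
Qed.

Lemma T2_spec a s : 0 < s ->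
  A a s < T2_alpha p A a s < A a s + PI /\ rad1 p (A a s) (T2_alpha p A a s) = rad2 p a (A a s).
Proof.
  intros Hs. destruct (A_spec a s Hs) as [HA _].
  assert (HR : 0 < Rad2 p a (A a s)).
  { rewrite Rad2_eq_rad2 by exact HA. destruct (half_angle_facts _ _ HA) as [_ [_ [_ [_ [_ HC]]]]].
    apply Rdiv_lt_0_compat; [apply gap2_pos, HA | exact HC]. }
  unfold T2_alpha, T_alpha, T_R. rewrite <- (Rad2_eq_rad2 a (A a s) HA). exact (A_spec _ _ HR).
Qed.

Lemma locally_pos r : 0 < r -> locally r (fun s => 0 < s).
Proof. exact (open_gt 0 r). Qed.

Lemma A_continuous a r : 0 < r -> continuity_pt (A a) r.
Proof.
  intros Hr.
  apply (implicit_continuity (fun s y => rad1 p a y - s) (A a) (fun _ => a) PI r).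
  - apply (filter_imp (fun s => 0 < s)); [|exact (locally_pos r Hr)]. intros s Hs.
    destruct (A_spec a s Hs) as [HA HR]. repeat split; try lra.
    intros u v Hu Huv Hv. assert (rad1 p a u < rad1 p a v) by (apply rad1_increasing; auto). lra.
  - apply continuity_pt_const. intros ? ?. reflexivity.
  - intros y _. apply (continuity_pt_minus (fun _ => rad1 p a y) (fun s => s)).
    + apply continuity_pt_const. intros ? ?. reflexivity.
    + apply continuity_pt_id.
Qed.

Lemma A_derive a r : 0 < r -> derivable_pt_lim (A a) r (/ rad1_dy a (A a r)).
Proof.
  intros Hr. destruct (A_spec a r Hr) as [HA HR].
  assert (Hd := rad1_dy_pos _ _ HA).
  replace (/ rad1_dy a (A a r)) with (- (0 - 1) / (rad1_dy a (A a r) - 0)) by (field; lra).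
  apply (implicit_derive (fun s y => rad1 p a y - s)); [| lra | apply A_continuous, Hr |].
  - apply (differentiable_pt_lim_minus (fun _ y => rad1 p a y) (fun s _ => s)).
    + apply differentiable_pt_lim_proj2_0, derivable_pt_lim_rad1_y, HA.
    + apply differentiable_pt_lim_proj1_0, derivable_pt_lim_id.
  - apply (filter_imp (fun s => 0 < s)); [|exact (locally_pos r Hr)]. intros s Hs.
    rewrite HR, (proj2 (A_spec a s Hs)). ring.
Qed.

Lemma T2_continuous a r : 0 < r -> continuity_pt (T2_alpha p A a) r.
Proof.
  intros Hr. destruct (A_spec a r Hr) as [HA _].
  apply (implicit_continuity (fun s y => rad1 p (A a s) y - rad2 p a (A a s)) _ (A a) PI r).
  - apply (filter_imp (fun s => 0 < s)); [|exact (locally_pos r Hr)]. intros s Hs.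
    destruct (T2_spec a s Hs) as [HT HR]. repeat split; try lra.
    intros u v Hu Huv Hv. assert (rad1 p (A a s) u < rad1 p (A a s) v) by (apply rad1_increasing; auto). lra.
  - apply A_continuous, Hr.
  - intros y Hy. apply derivable_continuous_pt. eexists.
    apply (derivable_pt_lim_minus (fun s => rad1 p (A a s) y) (fun s => rad2 p a (A a s))).
    + apply (derivable_pt_lim_comp_2d (rad1 p) (A a) (fun _ => y)).
      * apply differentiable_pt_lim_rad1, one_plus_cos_neq0, Hy.
      * apply A_derive, Hr.
      * apply derivable_pt_lim_const.
    + apply (derivable_pt_lim_comp (A a) (rad2 p a)); [apply A_derive, Hr | apply derivable_pt_lim_rad2_y, HA].
Qed.

Lemma T2_derive a r : 0 < r ->
  exists d, derivable_pt_lim (T2_alpha p A a) r d /\ 0 < d.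
Proof.
  intros Hr. destruct (A_spec a r Hr) as [HA _]. destruct (T2_spec a r Hr) as [HT HR].
  set (w := T2_alpha p A a).
  set (du := / rad1_dy a (A a r)). set (lx := rad1_dx (A a r) (w r)).
  set (ly := rad1_dy (A a r) (w r)). set (q := rad2_dy a (A a r)).
  assert (Hdu : 0 < du) by (apply Rinv_0_lt_compat, rad1_dy_pos, HA).
  assert (Hlx : lx < 0) by (apply rad1_dx_neg, HT).
  assert (Hly : 0 < ly) by (apply rad1_dy_pos, HT).
  assert (Hq : 0 < q) by (apply rad2_dy_pos, HA).
  exists (du * (q - lx) / ly). split; [|apply Rdiv_lt_0_compat; nra].
  replace (du * (q - lx) / ly) with (- (lx * du + ly * 0 - q * du) / (lx * 0 + ly * 1 - 0))
    by (field; lra).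
  apply (implicit_derive (fun s y => rad1 p (A a s) y - rad2 p a (A a s))); [| lra | apply T2_continuous, Hr |].
  - apply (differentiable_pt_lim_minus (fun s y => rad1 p (A a s) y) (fun s _ => rad2 p a (A a s))).
    + apply (differentiable_pt_lim_comp (rad1 p) (fun s _ => A a s) (fun _ y => y)).
      * apply differentiable_pt_lim_rad1, one_plus_cos_neq0, HT.
      * apply differentiable_pt_lim_proj1_0, A_derive, Hr.
      * apply differentiable_pt_lim_proj2_0, derivable_pt_lim_id.
    + apply (differentiable_pt_lim_proj1_0 (fun s => rad2 p a (A a s))).
      apply (derivable_pt_lim_comp (A a) (rad2 p a)); [apply A_derive, Hr | apply derivable_pt_lim_rad2_y, HA].
  - apply (filter_imp (fun s => 0 < s)); [|exact (locally_pos r Hr)]. intros s Hs.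
    unfold w. rewrite HR, (proj2 (T2_spec a s Hs)). ring.
Qed.

End PhaseMap.

End Oval.

Theorem mainTheorem5 :
  forall p : R -> R, oval_support p ->
    (exists A : R -> R -> R, phase_inverse p A) /\
    (forall A : R -> R -> R, phase_inverse p A ->
       forall a r : R, 0 < r ->
         (exists d, is_derive (fun s => T_alpha p A a s) r d /\ 0 < d) /\
         (exists d, is_derive (fun s => T2_alpha p A a s) r d /\ 0 < d)).
Proof.
  intros p [Hsmooth [_ Hcurv]].
  assert (Hp : forall x, ex_derive p x) by exact (Hsmooth 0%nat).
  assert (HDp : forall x, ex_derive (Derive p) x) by exact (Hsmooth 1%nat).
  split.
  - set (P a r y := 0 < r -> a < y < a + PI /\ Rad1 p a y = r).
    exists (fun a r => epsilon (inhabits 0) (P a r)).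
    intros a r Hr. apply (epsilon_spec (inhabits 0) (P a r)); [|exact Hr].
    destruct (rad1_surjective p Hp HDp Hcurv a r Hr) as [y [Hy Ey]].
    exists y. intros _. split; [exact Hy|]. rewrite Rad1_eq_rad1; auto.
  - intros A HA a r Hr. split.
    + exists (/ rad1_dy p a (A a r)). split.
      * apply is_derive_Reals, (A_derive p Hp HDp Hcurv A HA a r Hr).
      * apply Rinv_0_lt_compat, (rad1_dy_pos p Hp HDp Hcurv), (A_spec p Hp HDp Hcurv A HA a r Hr).
    + destruct (T2_derive p Hp HDp Hcurv A HA a r Hr) as [d [Hd Hd0]].
      exists d. split; [apply is_derive_Reals, Hd | exact Hd0].
Qed.
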